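(* Let $G$ be a finite loopless graph with no clique on $D+1$ vertices and with maximum degree $\Delta(G)\leq D$. Let $c\ge 1$ be an integer and let $D=\sum_{i=1}^{c+1}\alpha_i$, where $\alpha_1,\dots,\alpha_{c+1}\geq 2$ are integers. Let $\Xi$ be the set of all (not necessarily proper) colorings $\psi:V(G)\to\{1,\dots,c+1\}$, and for $\psi\in\Xi$ let $\Phi(\psi)=\sum_{i=1}^{c+1}\frac{f_i(\psi)}{\alpha_i}$, where $f_i(\psi)$ is the number of edges of $G$ both of whose endpoints have color $i$ under $\psi$. Then there exists a coloring $\xi\in\Xi$ such that: (1) $\Phi(\xi)=\min_{\psi\in\Xi}\Phi(\psi)$; and (2) for every $1\leq i\leq c+1$, there is no clique in $G$ on $\alpha_i+1$ vertices all of which have color $i$ under $\xi$. *)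

From mathcomp Require Import all_boot all_order all_algebra.
Set Implicit Arguments. Unset Strict Implicit. Unset Printing Implicit Defensive.
Import Order.TTheory GRing.Theory Num.Theory.

(* A finite loopless (multi)graph on vertex set T: m x y = number of edges
   joining x and y; symmetric and m x x = 0. *)
Definition loopless_graph (T : finType) (m : T -> T -> nat) : Prop :=
  (forall x y, m x y = m y x) /\ (forall x, m x x = 0%N).

Definition degree (T : finType) (m : T -> T -> nat) (x : T) : nat :=
  (\sum_(y : T) m x y)%N.

Definition adjacent (T : finType) (m : T -> T -> nat) (x y : T) : bool :=
  (0 < m x y)%N.

Definition is_clique (T : finType) (m : T -> T -> nat) (K : {set T}) : Prop :=
  forall x y, x \in K -> y \in K -> x != y -> adjacent m x y.

(* number of edges both of whose endpoints have colour i under psi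
   (ordered pairs counted, then halved; exact since m is symmetric, loopless) *)
Definition mono_edges (T : finType) (k : nat) (m : T -> T -> nat)
    (psi : T -> 'I_k) (i : 'I_k) : nat :=
  ((\sum_(x : T) \sum_(y : T) (((psi x == i) && (psi y == i)) * m x y))./2)%N.

Definition Phi (T : finType) (k : nat) (m : T -> T -> nat)
    (alpha : 'I_k -> nat) (psi : T -> 'I_k) : rat :=
  (\sum_(i < k) (mono_edges m psi i)%:R / (alpha i)%:R)%R.

From mathcomp Require Import all_boot all_order all_algebra.
From mathcomp Require Import zify ring lra.
Import Order.TTheory GRing.Theory Num.Theory.
Set Implicit Arguments. Unset Strict Implicit. Unset Printing Implicit Defensive.

(* Take a colouring minimising Phi and, among those, the number of monochromatic
   cliques on alpha_k + 1 vertices of colour k.  Minimality of Phi bounds the number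
   of neighbours of v of its own colour by alpha_(psi v), and equality forces exactly
   alpha_k neighbours of every colour k.  Hence recolouring a vertex v of such a
   clique K (of colour i) to any colour j keeps Phi and destroys K, so a new
   monochromatic clique of colour j appears: v together with its j-neighbours.
   Two successive recolourings show that, for j <> i, the j-neighbours of the
   vertices of K are either all complete or all anticomplete to the rest of K.
   In the complete case v and its D neighbours form a clique on D + 1 vertices.
   In the anticomplete case repeated recolouring yields arbitrarily long chains of
   monochromatic cliques in which non-consecutive cliques are disjoint, so the
   recoloured vertices are pairwise distinct: impossible in a finite graph. *)

Lemma sum_sym_double (T : finType) (g : T -> T -> nat) :
    (forall x y, g x y = g y x) -> (forall x, g x x = 0) ->
  \sum_x \sum_y g x y = (\sum_x \sum_y (enum_rank y < enum_rank x) * g x y).*2.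
Proof.
move=> gC g0.
have split x y : g x y = (enum_rank y < enum_rank x) * g x y + (enum_rank x < enum_rank y) * g x y.
  by case: ltngtP => [||/val_inj/enum_rank_inj ->]; rewrite ?mul1n ?mul0n ?addn0 ?g0.
rewrite -addnn [X in _ = X + _]exchange_big -big_split /=; apply: eq_bigr => x _.
rewrite -big_split /=; apply: eq_bigr => y _.
by rewrite [in LHS]split gC addnC.
Qed.

Lemma exists_other (T : finType) (A : {set T}) y : 1 < #|A| -> exists2 z, z \in A & z != y.
Proof.
rewrite (cardsD1 y) => A2; have /card_gt0P [z /setD1P [zy zA]] : 0 < #|A :\ y|.
  by move: A2; case: (y \in A) => /=; lia.
by exists z.
Qed.

Section Energy.
Variables (T : finType) (m : T -> T -> nat) (c : nat) (alpha : 'I_c.+1 -> nat).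
Hypothesis mC : forall x y, m x y = m y x.
Hypothesis m0 : forall x, m x x = 0.
Hypothesis alpha_gt0 : forall k, 0 < alpha k.

Local Notation colour := 'I_c.+1.
Local Notation colouring := {ffun T -> colour}.

Definition recolour (f : colouring) v j : colouring :=
  [ffun y => if y == v then j else f y].

Lemma recolour_at f v j : recolour f v j v = j.
Proof. by rewrite ffunE eqxx. Qed.

Lemma recolour_other f v j y : y != v -> recolour f v j y = f y.
Proof. by rewrite ffunE => /negbTE ->. Qed.

Definition coldeg (f : colouring) v k := \sum_y (f y == k) * m v y.

Lemma sum_coldeg f v : \sum_k coldeg f v k = degree m v.
Proof.
rewrite exchange_big; apply: eq_bigr => y _.
rewrite -big_distrl /= (bigD1 (f y)) //= eqxx big1 ?addn0 ?mul1n // => k.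
by rewrite eq_sym => /negbTE ->.
Qed.

Lemma coldeg_recolour f v j k : coldeg (recolour f v j) v k = coldeg f v k.
Proof.
apply: eq_bigr => y _; have [->|yv] := eqVneq y v; first by rewrite m0 !muln0.
by rewrite recolour_other.
Qed.

(* Ordered pairs are counted, so [mono_weight f k] is twice [mono_edges m f k]
   and [energy] below is twice [Phi]; this avoids halving. *)
Definition mono_weight (f : colouring) k :=
  \sum_x \sum_y ((f x == k) && (f y == k)) * m x y.

Definition mono_weight_off (f : colouring) v k :=
  \sum_(x | x != v) \sum_(y | y != v) ((f x == k) && (f y == k)) * m x y.

Lemma mono_weightE f k : mono_weight f k = (mono_edges m f k).*2.
Proof.
rewrite /mono_edges -/(mono_weight f k) /mono_weight.
rewrite (sum_sym_double (g := fun x y => ((f x == k) && (f y == k)) * m x y)) ?half_double //.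
  by move=> x y; rewrite andbC mC.
by move=> x; rewrite m0 muln0.
Qed.

Lemma mono_weight_split f v k :
  mono_weight f k = mono_weight_off f v k + ((f v == k) * coldeg f v k).*2.
Proof.
have row : \sum_y ((f v == k) && (f y == k)) * m v y = (f v == k) * coldeg f v k.
  rewrite /coldeg big_distrr; apply: eq_bigr => y _.
  by case: (f v == k); rewrite /= ?mul1n ?mul0n.
have col : \sum_(x | x != v) ((f x == k) && (f v == k)) * m x v = (f v == k) * coldeg f v k.
  rewrite /coldeg [in RHS](bigD1 v) //= m0 muln0 add0n big_distrr; apply: eq_bigr => x _.
  by rewrite mC andbC; case: (f v == k); rewrite /= ?mul1n ?mul0n.
rewrite /mono_weight (bigD1 v) //= row.
rewrite (eq_bigr (fun x => (((f x == k) && (f v == k)) * m x v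
   + \sum_(y | y != v) ((f x == k) && (f y == k)) * m x y)%N)); last first.
  by move=> x _; rewrite (bigD1 v).
by rewrite big_split /= col -/(mono_weight_off f v k) -addnn; lia.
Qed.

Lemma mono_weight_off_recolour f v j k :
  mono_weight_off (recolour f v j) v k = mono_weight_off f v k.
Proof. by apply: eq_bigr => x xv; apply: eq_bigr => y yv; rewrite !recolour_other. Qed.

Local Open Scope ring_scope.

Definition energy (f : colouring) : rat :=
  \sum_(k < c.+1) (mono_weight f k)%:R / (alpha k)%:R.

Lemma alpha_neq0 k : (alpha k)%:R != 0 :> rat.
Proof. by rewrite pnatr_eq0 -lt0n. Qed.

Lemma eq_Phi (f g : T -> colour) : f =1 g -> Phi m alpha f = Phi m alpha g.
Proof.
move=> fg; rewrite /Phi /mono_edges; apply: eq_bigr => k _.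
by congr ((_ ./2)%:R / _); apply: eq_bigr => x _; apply: eq_bigr => y _; rewrite !fg.
Qed.

Lemma Phi_energy (f : colouring) : Phi m alpha f = energy f / 2.
Proof.
rewrite /Phi /energy mulr_suml; apply: eq_bigr => k _.
by rewrite mono_weightE -muln2 natrM; field; rewrite alpha_neq0.
Qed.

Lemma energy_recolour f v j : energy (recolour f v j) = energy f
  + 2 * ((coldeg f v j)%:R / (alpha j)%:R)
  - 2 * ((coldeg f v (f v))%:R / (alpha (f v))%:R).
Proof.
have pick (i : colour) (e : colour -> nat) :
    \sum_(k < c.+1) ((i == k) * e k)%:R / (alpha k)%:R = (e i)%:R / (alpha i)%:R :> rat.
  rewrite (bigD1 i) //= eqxx mul1n big1 ?addr0 // => k ki.
  by rewrite eq_sym (negbTE ki) mul0r.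
rewrite /energy -[in RHS](pick j (coldeg f v)) -[in RHS](pick (f v) (coldeg f v)).
rewrite !mulr_sumr -big_split -sumrB /=; apply: eq_bigr => k _.
rewrite !(mono_weight_split _ v).
rewrite mono_weight_off_recolour coldeg_recolour recolour_at.
rewrite -!muln2 !natrD !(natrM _ _ 2); ring.
Qed.

Definition min_energy (f : colouring) := forall g, energy f <= energy g.

Lemma min_energy_coldeg f v k : min_energy f ->
  (coldeg f v (f v) * alpha k <= coldeg f v k * alpha (f v))%N.
Proof.
move=> /(_ (recolour f v k)); rewrite energy_recolour => le.
have : (coldeg f v (f v))%:R / (alpha (f v))%:R <= (coldeg f v k)%:R / (alpha k)%:R :> rat
  by lra.
rewrite ler_pdivrMr ?ltr0n // mulrAC ler_pdivlMr ?ltr0n //.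
by rewrite -!natrM ler_nat.
Qed.

Local Close Scope ring_scope.

Section Optimal.
Variable D : nat.
Hypothesis D_def : D = \sum_k alpha k.
Hypothesis degree_le : forall x, degree m x <= D.

Lemma min_energy_coldeg_own f v : min_energy f -> coldeg f v (f v) <= alpha (f v).
Proof.
move=> fmin; rewrite leqNgt; apply/negP => own_gt.
have gt k : alpha k < coldeg f v k.
  by have := min_energy_coldeg v k fmin; have := alpha_gt0 k; have := alpha_gt0 (f v); nia.
have := degree_le v; rewrite D_def -(sum_coldeg f) => le.
have rest : \sum_(k | k != ord0) alpha k <= \sum_(k | k != ord0) coldeg f v k.
  by apply: leq_sum => k _; exact: ltnW.
move: le; rewrite (bigD1 ord0) // [X in _ <= X](bigD1 ord0) //= => le.
by have := leq_trans (leq_add (gt ord0) rest) le; rewrite addSn ltnn.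
Qed.

Lemma min_energy_coldeg_eq f v : min_energy f ->
  coldeg f v (f v) = alpha (f v) -> forall k, coldeg f v k = alpha k.
Proof.
move=> fmin own_eq.
have ge k : alpha k <= coldeg f v k.
  by have := min_energy_coldeg v k fmin; rewrite own_eq; have := alpha_gt0 (f v); nia.
have excess : \sum_k (coldeg f v k - alpha k) = 0.
  have split : \sum_k coldeg f v k = \sum_k alpha k + \sum_k (coldeg f v k - alpha k).
    by rewrite -big_split; apply: eq_bigr => k _; rewrite /= subnKC.
  by have := degree_le v; rewrite D_def -(sum_coldeg f) split; lia.
move=> k; move/eqP: excess; rewrite sum_nat_eq0 => /forallP /(_ k).
by have := ge k; lia.
Qed.

Local Notation adj := (adjacent m).

Lemma adjC x y : adj x y = adj y x.
Proof. by rewrite /adjacent mC. Qed.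

Lemma adjxx x : adj x x = false.
Proof. by rewrite /adjacent m0. Qed.

Definition colnbhd (f : colouring) v k : {set T} := [set y | (f y == k) && adj v y].

Lemma card_colnbhd f v k : #|colnbhd f v k| <= coldeg f v k.
Proof.
rewrite -sum1_card big_mkcond /coldeg /=; apply: leq_sum => y _.
by rewrite inE /adjacent; case: (f y == k) => //=; rewrite mul1n; case: (m v y).
Qed.

Lemma colnbhd_recolour f v j k : colnbhd (recolour f v j) v k = colnbhd f v k.
Proof.
apply/setP => y; rewrite !inE; have [->|yv] := eqVneq y v; first by rewrite adjxx !andbF.
by rewrite recolour_other.
Qed.

Definition cliqueb (K : {set T}) := [forall x in K, forall y in K, (x != y) ==> adj x y].

Lemma cliquebP K : reflect (is_clique m K) (cliqueb K).
Proof.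
apply: (iffP forall_inP) => [cl x y xK yK xy|cl x xK].
  by move: (cl x xK) => /forall_inP /(_ y yK) /implyP; apply.
by apply/forall_inP => y yK; apply/implyP; apply: cl.
Qed.

Definition mono_clique (f : colouring) k K :=
  [/\ is_clique m K, #|K| = (alpha k).+1 & forall x, x \in K -> f x = k].

Definition mono_cliqueb (f : colouring) (K : {set T}) :=
  [exists k, [&& #|K| == (alpha k).+1, cliqueb K & [forall x in K, f x == k]]].

Lemma mono_cliquebP f K : reflect (exists k, mono_clique f k K) (mono_cliqueb f K).
Proof.
apply: (iffP existsP) => [[k /and3P [/eqP cardK /cliquebP clK /forall_inP colK]]|].
  by exists k; split=> // x /colK /eqP.
move=> [k [clK cardK colK]].
exists k; rewrite cardK eqxx; apply/and3P; split => //; first exact/cliquebP.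
by apply/forall_inP => x /colK ->.
Qed.

Definition num_mono_cliques f := #|[set K | mono_cliqueb f K]|.

Definition optimal f :=
  min_energy f /\ forall g, min_energy g -> num_mono_cliques f <= num_mono_cliques g.

Lemma exists_optimal : exists f, optimal f.
Proof.
have [f0 _ f0min] := @arg_minP _ _ _ ([ffun=> ord0] : colouring) xpredT energy isT.
have f0min' : [forall g, (energy f0 <= energy g)%R] by apply/forallP => g; apply: f0min.
have [f fmin fopt] :=
  @arg_minnP _ f0 (fun f => [forall g, (energy f <= energy g)%R]) num_mono_cliques f0min'.
by exists f; split=> [|g gmin]; [exact/forallP | apply: fopt; apply/forallP].
Qed.

Lemma mono_clique_card_gt1 f k (A : {set T}) : mono_clique f k A -> 1 < #|A|.
Proof. by case=> _ -> _; rewrite ltnS alpha_gt0. Qed.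

Lemma mono_clique_colnbhd f k S w : min_energy f -> mono_clique f k S -> w \in S ->
  colnbhd f w k = S :\ w.
Proof.
move=> fmin [clS cardS colS] wS.
have sub : S :\ w \subset colnbhd f w k.
  apply/subsetP => y; rewrite !inE => /andP [yw yS].
  by rewrite colS // eqxx /= clS // eq_sym.
have own := min_energy_coldeg_own w fmin; rewrite colS // in own.
have := card_colnbhd f w k; move: cardS; rewrite (cardsD1 w) wS => cardS le.
by apply/eqP; rewrite eq_sym eqEcard sub /=; lia.
Qed.

Lemma mono_clique_eq f k S v : min_energy f -> mono_clique f k S -> v \in S ->
  S = v |: colnbhd f v k.
Proof. by move=> fmin Sk vS; rewrite (mono_clique_colnbhd fmin Sk vS) setD1K. Qed.

Lemma mono_clique_coldeg f i K v : min_energy f -> mono_clique f i K -> v \in K ->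
  forall k, coldeg f v k = alpha k.
Proof.
move=> fmin Ki vK; have [_ cardK colK] := Ki.
have own := min_energy_coldeg_own v fmin; rewrite colK // in own.
apply: min_energy_coldeg_eq => //; rewrite colK //.
have := card_colnbhd f v i; rewrite (mono_clique_colnbhd fmin Ki vK).
by move: cardK; rewrite (cardsD1 v) vK; lia.
Qed.

Lemma energy_recolour_mono_clique f i K v j : min_energy f -> mono_clique f i K -> v \in K ->
  energy (recolour f v j) = energy f.
Proof.
move=> fmin Ki vK; rewrite energy_recolour !(mono_clique_coldeg fmin Ki vK).
by rewrite !divff ?alpha_neq0 // addrK.
Qed.

Lemma mono_cliqueb_recolour f v j (K S : {set T}) : min_energy (recolour f v j) -> v \in K ->
  mono_cliqueb (recolour f v j) S ->
  (S != K /\ mono_cliqueb f S) \/ S = v |: colnbhd (recolour f v j) v j.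
Proof.
move=> gmin vK /mono_cliquebP [k Sk]; have [clS cardS colS] := Sk.
have [vS|vS] := boolP (v \in S).
  have kj : k = j by rewrite -(colS v vS) recolour_at.
  by right; subst k; exact: mono_clique_eq gmin Sk vS.
left; split; first by apply: contraNneq vS => ->.
apply/mono_cliquebP; exists k; split=> // x xS; rewrite -(colS x xS) recolour_other //.
by apply: contraNneq vS => <-.
Qed.

(* The recolouring keeps the energy and destroys K; every other monochromatic
   clique of the new colouring avoiding v was already one, so optimality forces
   v and its j-neighbours to form a monochromatic clique. *)
Lemma optimal_recolour f i K v j : optimal f -> mono_clique f i K -> v \in K ->
  optimal (recolour f v j) /\ exists S, mono_clique (recolour f v j) j S /\ v \in S.
Proof.
move=> [fmin fopt] Ki vK; set g := recolour f v j.
have gmin : min_energy g.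
  by move=> h; rewrite (energy_recolour_mono_clique _ fmin Ki vK); apply: fmin.
set N := v |: colnbhd g v j.
set Bf := [set S | mono_cliqueb f S]; set Bg := [set S | mono_cliqueb g S].
have KBf : K \in Bf by rewrite inE; apply/mono_cliquebP; exists i.
have cardBf : #|Bf :\ K| = (num_mono_cliques f).-1.
  by rewrite /num_mono_cliques -/Bf [in RHS](cardsD1 K) KBf.
have num_pos : 0 < num_mono_cliques f by rewrite /num_mono_cliques -/Bf (cardsD1 K) KBf.
have sub : Bg \subset (Bf :\ K) :|: (Bg :&: [set N]).
  apply/subsetP => S; rewrite !inE => SBg; rewrite SBg.
  by case: (mono_cliqueb_recolour gmin vK SBg) => [[-> ->]|->]; rewrite ?eqxx ?orbT.
have le_fg := fopt g gmin; have := subset_leq_card sub; rewrite -/(num_mono_cliques g).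
have [NBg|NBg] := boolP (N \in Bg); last first.
  rewrite (_ : Bg :&: [set N] = set0) ?setU0 ?cardBf; first by lia.
  apply/setP => S; rewrite !inE; case: eqP => [->|]; rewrite ?andbF // andbT.
  by apply/negbTE; rewrite inE in NBg.
rewrite cardsU cardBf (setIidPr _) ?sub1set // cards1 => le_gf; split.
  by split=> // h hmin; apply: leq_trans (fopt h hmin); lia.
move: NBg; rewrite inE => /mono_cliquebP [k Nk]; exists N; split; last exact: setU11.
have [_ _ colN] := Nk; have kj : k = j by rewrite -(colN v (setU11 _ _)) recolour_at.
by rewrite -kj.
Qed.

Lemma mono_clique_colnbr f k S s x : min_energy f -> mono_clique f k S -> s \in S ->
  f x = k -> adj s x -> x \in S.
Proof.
move=> fmin Sk sS fx sx; have : x \in colnbhd f s k by rewrite inE fx eqxx.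
by rewrite (mono_clique_colnbhd fmin Sk sS) => /setD1P [].
Qed.

Lemma neq_of_colour (f : colouring) x y : f x != f y -> x != y.
Proof. by apply: contraNneq => ->. Qed.

Definition complete_to z (K : {set T}) y := forall w, w \in K -> w != y -> adj z w.

(* Recolour y to j, then z back to i: the new clique of colour i through z
   contains w, hence all of K except y. *)
Lemma adj_complete_to f i K j y z w : optimal f -> mono_clique f i K -> j != i ->
  y \in K -> f z = j -> adj y z -> w \in K -> w != y -> adj z w -> complete_to z K y.
Proof.
move=> fopt Ki ji yK fz yz wK wy zw w' w'K w'y; have [clK _ colK] := Ki.
have [f1opt [S [Sj yS]]] := optimal_recolour j fopt Ki yK; have f1min := f1opt.1.
have zy : z != y by apply: (@neq_of_colour f); rewrite fz colK.
have zS : z \in S by apply: mono_clique_colnbr f1min Sj yS _ yz; rewrite recolour_other.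
have [[f2min _] [U [Ui zU]]] := optimal_recolour i f1opt Sj zS.
have f2K u : u \in K -> u != y -> recolour (recolour f y j) z i u = i.
  move=> uK uy; rewrite !recolour_other ?colK //.
  by apply: (@neq_of_colour f); rewrite fz colK // eq_sym.
have wU : w \in U by apply: mono_clique_colnbr f2min Ui zU (f2K w wK wy) zw.
have [-> //|w'w] := eqVneq w' w.
have w'U : w' \in U.
  by apply: mono_clique_colnbr f2min Ui wU (f2K w' w'K w'y) _; apply: clK; rewrite // eq_sym.
have [clU _ _] := Ui; apply: clU => //.
by apply: (@neq_of_colour f); rewrite fz colK // eq_sym.
Qed.

Lemma complete_to_colnbr f i K j y z1 z2 : optimal f -> mono_clique f i K -> j != i ->
  y \in K -> f z1 = j -> adj y z1 -> complete_to z1 K y ->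
  f z2 = j -> adj y z2 -> complete_to z2 K y.
Proof.
move=> fopt Ki ji yK fz1 yz1 z1K fz2 yz2 w wK wy; have [clK _ colK] := Ki.
have [f1opt [S [Sj yS]]] := optimal_recolour j fopt Ki yK; have f1min := f1opt.1.
have z_neq_y z : f z = j -> z != y by move=> fz; apply: (@neq_of_colour f); rewrite fz colK.
have S_colnbr z : f z = j -> adj y z -> z \in S.
  by move=> fz yz; apply: mono_clique_colnbr f1min Sj yS _ yz; rewrite recolour_other ?z_neq_y.
have f1w : recolour f y j w = i by rewrite recolour_other ?colK.
have yw : adj y w by apply: clK; rewrite // eq_sym.
rewrite adjC; apply: (adj_complete_to f1opt Sj _ yS f1w yw (S_colnbr z1 fz1 yz1)).
- by rewrite eq_sym.
- exact: z_neq_y.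
- by rewrite adjC; apply: z1K.
- exact: S_colnbr.
- exact: z_neq_y.
Qed.

Definition anti_at (f : colouring) (K : {set T}) j y :=
  [forall z, forall w, [&& f z == j, adj y z, w \in K & w != y] ==> ~~ adj z w].

Lemma anti_atP (f : colouring) (K : {set T}) (j : colour) y : reflect
  (forall z w, f z = j -> adj y z -> w \in K -> w != y -> ~~ adj z w) (anti_at f K j y).
Proof.
apply: (iffP forallP) => [anti z w fz yz wK wy|anti z]; last first.
  by apply/forallP => w; apply/implyP => /and4P [/eqP fz yz wK wy]; apply: anti.
by move: (anti z) => /forallP /(_ w) /implyP; apply; rewrite fz eqxx yz wK.
Qed.

Definition anti (f : colouring) (K : {set T}) j :=
  forall y z w, y \in K -> f z = j -> adj y z -> w \in K -> w != y -> ~~ adj z w.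

Definition complete (f : colouring) (K : {set T}) j :=
  forall y z, y \in K -> f z = j -> adj y z -> complete_to z K y.

Lemma anti_at_anti f i K j y : optimal f -> mono_clique f i K -> j != i ->
  y \in K -> anti_at f K j y -> anti f K j.
Proof.
move=> fopt Ki ji yK /anti_atP anti_y y' z w y'K fz y'z wK wy'; apply/negP => zw.
have z_y' := adj_complete_to fopt Ki ji y'K fz y'z wK wy' zw.
have [ey|y'y] := eqVneq y' y; first by subst y'; move/negP: (anti_y z w fz y'z wK wy').
have zy : adj z y by apply: z_y'; rewrite // eq_sym.
have yz : adj y z by rewrite adjC.
by move/negP: (anti_y z y' fz yz y'K y'y); rewrite adjC.
Qed.

Lemma anti_or_complete f i K j : optimal f -> mono_clique f i K -> j != i ->
  anti f K j \/ complete f K j.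
Proof.
move=> fopt Ki ji; have [anti_all|not_all] := boolP [forall y in K, anti_at f K j y].
  by left => y z w yK; move/forall_inP: anti_all => /(_ y yK) /anti_atP; apply.
right => y z yK fz yz.
have : ~~ anti_at f K j y.
  apply: contraNN not_all => anti_y; apply/forall_inP => y' y'K.
  by apply/anti_atP => z' w; apply: (anti_at_anti fopt Ki ji yK anti_y).
rewrite negb_forall => /existsP [z0]; rewrite negb_forall => /existsP [w0].
rewrite negb_imply negbK => /andP [/and4P [/eqP fz0 yz0 w0K w0y] z0w0].
have z0_y := adj_complete_to fopt Ki ji yK fz0 yz0 w0K w0y z0w0.
exact: complete_to_colnbr fopt Ki ji yK fz0 yz0 z0_y fz yz.
Qed.

Lemma colnbhd_mono_clique f i K v k : optimal f -> mono_clique f i K -> v \in K ->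
  exists S, [/\ optimal (recolour f v k), mono_clique (recolour f v k) k S, v \in S
            & colnbhd f v k = S :\ v].
Proof.
move=> fopt Ki vK; have [gopt [S [Sk vS]]] := optimal_recolour k fopt Ki vK.
by exists S; split; rewrite // -(colnbhd_recolour f v k) (mono_clique_colnbhd gopt.1 Sk vS).
Qed.

Lemma card_nbhd f i K v : optimal f -> mono_clique f i K -> v \in K ->
  #|[set y | adj v y]| = D.
Proof.
move=> fopt Ki vK.
have card_set (A : {set T}) : #|A| = \sum_y (y \in A).
  by rewrite -sum1_card big_mkcond; apply: eq_bigr => y _; case: (y \in A).
rewrite D_def card_set.
rewrite (eq_bigr (fun k => #|colnbhd f v k|)); last first.
  move=> k _; have [S [_ [_ cardS _] vS ->]] := colnbhd_mono_clique k fopt Ki vK.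
  by move: cardS; rewrite (cardsD1 v) vS => /eqP; rewrite eqSS => /eqP.
under [X in _ = X]eq_bigr do rewrite card_set.
rewrite exchange_big; apply: eq_bigr => y _; rewrite inE.
under eq_bigr do rewrite inE.
by rewrite (bigD1 (f y)) //= eqxx big1 ?addn0 // => k; rewrite eq_sym => /negbTE ->.
Qed.

Lemma complete_nbhd_clique f i K v :
    (forall g i K j, optimal g -> mono_clique g i K -> j != i -> complete g K j) ->
    optimal f -> mono_clique f i K -> v \in K ->
  #|v |: [set y | adj v y]| = D.+1 /\ is_clique m (v |: [set y | adj v y]).
Proof.
move=> all_complete fopt Ki vK; split.
  by rewrite cardsU1 inE adjxx (card_nbhd fopt Ki vK).
have nbhd_colnbhd y : adj v y -> y \in colnbhd f v (f y) by rewrite inE eqxx.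
move=> p q; rewrite !in_setU1 !inE => /predU1P [->|vp] /predU1P [->|vq] pq //.
- by rewrite eqxx in pq.
- by rewrite adjC.
have [S [gopt Sp vS NS]] := colnbhd_mono_clique (f p) fopt Ki vK.
have pS : p \in S :\ v by rewrite -NS nbhd_colnbhd.
have [fpq|fpq] := eqVneq (f q) (f p).
  have qS : q \in S :\ v by rewrite -NS -fpq nbhd_colnbhd.
  have [clS _ _] := Sp; apply: clS pq; [exact: (setD1P pS).2 | exact: (setD1P qS).2].
have qv : q != v by apply: contraTneq vq => ->; rewrite adjxx.
rewrite adjC; apply: (all_complete _ _ _ _ gopt Sp fpq v q vS) => //.
- by rewrite recolour_other.
- exact: (setD1P pS).2.
- exact: (setD1P pS).1.
Qed.

Section Chain.
Variables (i j : colour).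
Hypothesis ji : j != i.
Hypothesis alpha_gt1 : forall k, 1 < alpha k.

Definition alt t := if odd t then j else i.

Lemma alt_neq t : alt t.+1 != alt t.
Proof. by rewrite /alt /=; case: (odd t); rewrite // eq_sym. Qed.

Lemma altSS t : alt t.+2 = alt t.
Proof. by rewrite /alt /= negbK. Qed.

Lemma alt_neq_succ t s : alt t != alt s -> alt t = alt s.+1.
Proof. by rewrite /alt /=; case: (odd t); case: (odd s); rewrite ?eqxx. Qed.

Record chain (psi : nat -> colouring) (K : nat -> {set T}) (x : nat -> T) (n : nat) := Chain {
  ch_opt : forall t, t <= n -> optimal (psi t);
  ch_mono : forall t, t <= n -> mono_clique (psi t) (alt t) (K t);
  ch_anti : forall t, t <= n -> anti (psi t) (K t) (alt t.+1);
  ch_mem : forall t, t < n -> x t \in K t;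
  ch_mem_next : forall t, t < n -> x t \in K t.+1;
  ch_recolour : forall t, t < n -> psi t.+1 = recolour (psi t) (x t) (alt t.+1);
  ch_disj : forall r t y, t <= n -> r.+2 <= t -> y \in K r -> y \in K t -> False;
  ch_meet : forall t y, t < n -> y \in K t -> y \in K t.+1 -> y = x t;
  ch_neq_prev : forall t, 0 < t < n -> x t != x t.-1 }.

Lemma chain_colour psi K x n r t w : chain psi K x n -> r <= t -> t <= n ->
  (forall s, r <= s -> s < t -> w != x s) -> psi t w = psi r w.
Proof.
move=> ch; elim: t => [|t IH] rt tn wx; first by have -> : r = 0 by lia.
have [-> //|rt1] := eqVneq r t.+1.
rewrite (ch_recolour ch) // recolour_other; last by apply: wx; lia.
by apply: IH => [||s rs st]; [lia | lia | apply: wx; lia].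
Qed.

Lemma chain_uniq psi K x n s t : chain psi K x n -> s < t -> t < n -> x s != x t.
Proof.
move=> ch st tn; have [ets|tSs] := eqVneq t s.+1.
  by rewrite ets in tn *; rewrite eq_sym; apply: (ch_neq_prev ch (t := s.+1)).
apply/negP => /eqP xst; apply: (ch_disj ch (r := s) (t := t) (y := x s)); try lia.
  by apply: (ch_mem ch); lia.
by rewrite xst (ch_mem ch).
Qed.

Section Step.
Variables (psi : nat -> colouring) (K : nat -> {set T}) (x : nat -> T) (n : nat).
Hypothesis ch : chain psi K x n.
Variables (xn : T) (S : {set T}).
Hypotheses (xnK : xn \in K n) (xn_new : xn != x n.-1).
Local Notation g := (recolour (psi n) xn (alt n.+1)).
Hypotheses (gopt : optimal g) (Sg : mono_clique g (alt n.+1) S) (xnS : xn \in S).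

Lemma step_meet y : y \in K n -> y \in S -> y = xn.
Proof.
move=> yK yS; apply/eqP; apply: contraT => yxn.
have [_ _ colK] := ch_mono ch (leqnn n); have [_ _ colS] := Sg.
have := colS y yS; rewrite recolour_other // colK // => e.
by move: (alt_neq n); rewrite -e eqxx.
Qed.

Lemma step_anti : anti g S (alt n.+2).
Proof.
rewrite altSS; have nn1 : alt n != alt n.+1 by rewrite eq_sym alt_neq.
have [//|complS] := anti_or_complete gopt Sg nn1.
have [clK cardK colK] := ch_mono ch (leqnn n); have [clS cardS colS] := Sg.
have [z zK zxn] := exists_other xn (mono_clique_card_gt1 (ch_mono ch (leqnn n))).
have [w wS wxn] := exists_other xn (mono_clique_card_gt1 Sg).
have gz : g z = alt n by rewrite recolour_other ?colK.
have xnz : adj xn z by apply: clK; rewrite // eq_sym.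
have zw : adj z w := complS _ _ xnS gz xnz w wS wxn.
have psiw : psi n w = alt n.+1 by rewrite -(colS w wS) recolour_other.
have xnw : adj xn w by apply: clS; rewrite // eq_sym.
by have := ch_anti ch (leqnn n) xnK psiw xnw zK zxn; rewrite adjC zw.
Qed.

Lemma step_prev y : 0 < n -> y \in K n.-1 -> y \in S -> y != x n.-1 -> False.
Proof.
move=> n0 yK yS yx; have pn : n.-1 < n by lia.
have [clS _ colS] := Sg; have [clp _ _] := ch_mono ch (leq_pred n).
have xK : x n.-1 \in K n by have := ch_mem_next ch pn; rewrite prednK.
have yxn : y != xn.
  by apply: contraNneq yx => yxn; apply/eqP; apply: (ch_meet ch pn yK); rewrite prednK // yxn.
have psiy : psi n y = alt n.+1 by rewrite -(colS y yS) recolour_other.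
have xy : adj (x n.-1) y by apply: clp; rewrite ?(ch_mem ch pn) // eq_sym.
by have := ch_anti ch (leqnn n) xK psiy xy xnK xn_new; rewrite clS.
Qed.

Lemma step_old r y : r.+2 <= n -> y \in K r -> y \in S -> y != x r -> False.
Proof.
move=> rn yK yS yx; have [clS _ colS] := Sg.
have xnKr : xn \notin K r by apply/negP => xnKr; apply: (ch_disj ch (leqnn n) rn xnKr xnK).
have [clr cardr colr] := ch_mono ch (ltnW (ltnW rn)).
have g_Kr q : q \in K r -> q != x r -> g q = alt r.
  move=> qK qx; rewrite recolour_other; last by apply: contraNneq xnKr => <-.
  rewrite (chain_colour ch (r := r)) ?colr //; first lia; move=> s rs sn.
  have [->|sr] := eqVneq s r; first exact: qx.
  apply/negP => /eqP qxs; have [sr1|sr1] := eqVneq s r.+1.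
    by move: qx; rewrite (ch_meet ch _ qK) ?eqxx ?qxs ?sr1 ?(ch_mem ch) //; lia.
  apply: (ch_disj ch (r := r) (t := s) (y := q) _ _ qK); [lia | lia |].
  by rewrite qxs (ch_mem ch) //; lia.
have altr : alt r = alt n.+1 by rewrite -(g_Kr y yK yx) colS.
have psi_xn : psi r xn = alt r.+1.
  have [_ _ colK] := ch_mono ch (leqnn n).
  rewrite -(chain_colour ch (r := r) (t := n)) ?colK //; [|lia|].
    by apply: alt_neq_succ; rewrite altr eq_sym alt_neq.
  move=> s rs sn; have [sn1|sn1] := eqVneq s n.-1; first by rewrite sn1.
  apply/negP => /eqP xns; apply: (ch_disj ch (r := s) (t := n) (y := xn)) => //; first by lia.
  by rewrite xns (ch_mem ch).
have yxn : y != xn by apply: contraNneq xnKr => <-.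
(* A third vertex of K r would lie in S, hence be adjacent to xn, which the anti
   property of K r forbids. *)
have sub : K r \subset [set x r; y].
  apply/subsetP => q qK; rewrite !inE; apply/negPn/negP; rewrite negb_or => /andP [qx qy].
  have qS : q \in S.
    apply: (mono_clique_colnbr gopt.1 Sg yS); rewrite ?g_Kr ?altr //.
    by apply: clr; rewrite // eq_sym.
  have qxn : q != xn by apply: contraNneq xnKr => <-.
  have := ch_anti ch (ltnW (ltnW rn)) yK psi_xn (clS _ _ yS xnS yxn) qK qy.
  by rewrite clS // eq_sym.
have := subset_leq_card sub; rewrite cards2 cardr; have := alpha_gt1 (alt r).
by case: (x r != y) => /=; lia.
Qed.

Lemma step_disj_other r y : r < n -> y \in K r -> y \in S -> y != x r -> False.
Proof.
move=> rn yK yS yx; have [rn1|rn1] := eqVneq r.+1 n.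
  by apply: (step_prev (y := y)); rewrite -?rn1 //.
by apply: (step_old (r := r)) yK yS yx; lia.
Qed.

Lemma step_disj r y : r.+2 <= n.+1 -> y \in K r -> y \in S -> False.
Proof.
move=> rn yK yS; have [yx|yx] := eqVneq y (x r); last exact: (step_disj_other rn yK yS yx).
have yK1 : y \in K r.+1 by rewrite yx (ch_mem_next ch).
have [rn1|rn1] := eqVneq r.+1 n.
  by move: xn_new; rewrite -(step_meet _ yS) -?rn1 // yx eqxx.
apply: (step_disj_other (r := r.+1)) yK1 yS _; first by lia.
by rewrite yx; apply: (chain_uniq ch); lia.
Qed.

Lemma chain_step : chain (fun t => if t == n.+1 then g else psi t)
  (fun t => if t == n.+1 then S else K t) (fun t => if t == n then xn else x t) n.+1.
Proof.
have n1 t : t <= n -> (t == n.+1) = false by move=> tn; apply/eqP; lia.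
have S1 t : t < n -> (t.+1 == n.+1) = false by move=> tn; apply/eqP; lia.
constructor=> [t tn|t tn|t tn|t tn|t tn|t tn|r t y tn rt|t y tn|t /andP [t0 tn]] /=.
- by have [//|tn1] := eqVneq t n.+1; apply: (ch_opt ch); lia.
- by have [->//|tn1] := eqVneq t n.+1; apply: (ch_mono ch); lia.
- by have [->|tn1] := eqVneq t n.+1; [exact: step_anti | apply: (ch_anti ch); lia].
- rewrite n1 //; have [->//|tn'] := eqVneq t n; apply: (ch_mem ch); lia.
- by have [->|tn'] := eqVneq t n; rewrite ?eqxx // S1 ?(ch_mem_next ch) //; lia.
- have [->|tn'] := eqVneq t n; first by rewrite eqxx n1.
  by rewrite S1 ?n1 ?(ch_recolour ch) //; lia.
- rewrite n1; last by lia.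
  have [et|tn1] := eqVneq t n.+1; last by apply: (ch_disj ch) rt; lia.
  by subst t => yK yS; apply: (step_disj rt yK yS).
- rewrite n1; last by lia.
  have [->|tn'] := eqVneq t n; first by rewrite eqxx; exact: step_meet.
  by rewrite S1; [apply: (ch_meet ch) | lia]; lia.
- have [et|tn'] := eqVneq t n.
    by subst t; rewrite (_ : (n.-1 == n) = false) //; apply/eqP; lia.
  by rewrite (_ : (t.-1 == n) = false); [apply: (ch_neq_prev ch) | apply/eqP]; lia.
Qed.

End Step.

Lemma chain_ext psi K x n : chain psi K x n -> exists psi' K' x', chain psi' K' x' n.+1.
Proof.
move=> ch; have Kn := ch_mono ch (leqnn n).
have [xn xnK xn_new] := exists_other (x n.-1) (mono_clique_card_gt1 Kn).
have [gopt [S [Sg xnS]]] := optimal_recolour (alt n.+1) (ch_opt ch (leqnn n)) Kn xnK.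
by do 3 eexists; exact: (chain_step ch xnK xn_new gopt Sg xnS).
Qed.

Lemma chain_base f K y : optimal f -> mono_clique f i K -> anti f K j ->
  chain (fun _ => f) (fun _ => K) (fun _ => y) 0.
Proof.
move=> fopt Ki Kanti; constructor=> //.
- by move=> t; rewrite leqn0 => /eqP ->.
- by move=> t; rewrite leqn0 => /eqP ->.
- by move=> r t y' t0 rt; lia.
- by move=> t /andP [t0 t1]; lia.
Qed.

Lemma no_anti f K : optimal f -> mono_clique f i K -> ~ anti f K j.
Proof.
move=> fopt Ki Kanti; have /card_gt0P [y _] : 0 < #|K| by case: Ki => _ ->.
have long n : exists psi K' x, chain psi K' x n.
  elim: n => [|n [psi [K' [x ch]]]]; last exact: chain_ext ch.
  by exists (fun _ => f), (fun _ => K), (fun _ => y); apply: chain_base.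
have [psi [K' [x ch]]] := long #|T|.+1.
have inj : injective (fun t : 'I_#|T|.+1 => x t).
  move=> s t /= xst; apply/val_inj; case: (ltngtP s t) => // st.
    by have := chain_uniq ch st (ltn_ord t); rewrite xst eqxx.
  by have := chain_uniq ch st (ltn_ord s); rewrite xst eqxx.
by have := leq_card _ inj; rewrite card_ord ltnn.
Qed.

End Chain.

Section NoLargeClique.
Hypothesis no_large_clique : forall K : {set T}, #|K| = D.+1 -> ~ is_clique m K.
Hypothesis alpha_gt1 : forall k, 1 < alpha k.

Lemma optimal_complete f i K j : optimal f -> mono_clique f i K -> j != i -> complete f K j.
Proof.
move=> fopt Ki ji; case: (anti_or_complete fopt Ki ji) => // Kanti.
by case: (no_anti ji alpha_gt1 fopt Ki Kanti).
Qed.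

Lemma optimal_no_mono_clique f i K : optimal f -> ~ mono_clique f i K.
Proof.
move=> fopt Ki; have [_ cardK _] := Ki; have /card_gt0P [v vK] : 0 < #|K| by rewrite cardK.
have [card_clique clique] := complete_nbhd_clique optimal_complete fopt Ki vK.
exact: no_large_clique card_clique clique.
Qed.

End NoLargeClique.

End Optimal.

End Energy.

Theorem theorem2 (T : finType) (m : T -> T -> nat) (D c : nat)
  (alpha : 'I_c.+1 -> nat) :
  loopless_graph m ->
  (forall K : {set T}, #|K| = D.+1 -> ~ is_clique m K) ->
  (forall x : T, degree m x <= D) ->
  1 <= c ->
  D = \sum_(i < c.+1) alpha i ->
  (forall i, 2 <= alpha i) ->
  exists xi : T -> 'I_c.+1,
    (forall psi : T -> 'I_c.+1, (Phi m alpha xi <= Phi m alpha psi)%R) /\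
    (forall (i : 'I_c.+1) (K : {set T}),
        #|K| = (alpha i).+1 -> is_clique m K -> ~ (forall x, x \in K -> xi x = i)).
Proof.
move=> [mC m0] no_large_clique degree_le _ D_def alpha_gt1.
have alpha_gt0 k : 0 < alpha k by apply: ltnW.
have [f [fmin fopt]] := exists_optimal m alpha.
exists f; split=> [psi | i K cardK clK colK].
  rewrite -(eq_Phi m alpha (ffunE psi)) !(Phi_energy mC m0 alpha_gt0).
  by rewrite ler_pM2r ?invr_gt0 ?ltr0n //; apply: fmin.
apply: (optimal_no_mono_clique mC m0 alpha_gt0 D_def degree_le no_large_clique alpha_gt1
  (conj fmin fopt) (i := i) (K := K)).
by split.
Qed.
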